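(* Let $B=\mathrm{GF}(p^m)$ and $F=\mathrm{GF}(p^{mt})$ and assume $t$ is divisible by $p$. Let $\alpha^*\neq\overline{\alpha}$ be elements of $F$, and let $K_{\alpha^*,\overline{\alpha}}=\{z\in F:\mathrm{Tr}_{F/B}(z(\overline{\alpha}-\alpha^* ))=0\}$, a $B$-subspace of dimension $t-1$. Let $\{u_1,\dots,u_{t-1}\}$ and $\{v_1,\dots,v_{t-1}\}$ be two bases of $K_{\alpha^*,\overline{\alpha}}$ over $B$, completed to bases $\{u_1,\dots,u_t\}$ and $\{v_1,\dots,v_t\}$ of $F$ over $B$. For $i\in[t]$ set $p_i(x)=\dfrac{\mathrm{Tr}_{F/B}(u_i(x-\alpha^* ))}{x-\alpha^*}$ and $q_i(x)=\dfrac{\mathrm{Tr}_{F/B}(v_i(x-\overline{\alpha}))}{x-\overline{\alpha}}$. Then $p_t(\overline{\alpha})$ lies in the $B$-span of $\{q_i(\overline{\alpha}):i\in[t-1]\}$, and $q_t(\alpha^* )$ lies in the $B$-span of $\{p_i(\alpha^* ):i\in[t-1]\}$.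
   Context: $\mathrm{Tr}_{F/B}(x)=\sum_{i=0}^{t-1}x^{|B|^i}$ is the field trace; $[t]=\{1,\dots,t\}$. ''Dependent over $B$'' means lying in the $B$-linear span. *)

From HB Require Import structures.
From mathcomp Require Import all_boot all_order all_algebra all_field.
Set Implicit Arguments. Unset Strict Implicit. Unset Printing Implicit Defensive.
Import GRing.Theory.
Local Open Scope ring_scope.

(* B is a finite field, F a finite-dimensional field extension of B, so
   F = GF(|B|^t) with t = \dim {:F}.  Field trace as in the paper:
   Tr_{F/B}(x) = \sum_{i=0}^{t-1} x^{|B|^i}. *)
Definition trFB (B : finFieldType) (F : fieldExtType B) (x : F) : F :=
  \sum_(i < \dim {:F}) x ^+ (#|B| ^ i)%N.

Definition trpoly (B : finFieldType) (F : fieldExtType B) (a u : F) : {poly F} :=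
  \sum_(i < \dim {:F}) (u ^+ (#|B| ^ i)%N)%:P * ('X - a%:P) ^+ (#|B| ^ i)%N.

(* The polynomial p(X) = Tr_{F/B}(u (X - a)) / (X - a)  (exact polynomial
   division, since X = a is a root of the numerator); trquot a u x = p(x). *)
Definition trquot (B : finFieldType) (F : fieldExtType B) (a u x : F) : F :=
  (trpoly a u %/ ('X - a%:P)).[x].

Lemma trpolyE (B : finFieldType) (F : fieldExtType B) (a u x : F) :
  (trpoly a u).[x] = trFB (u * (x - a)).
Proof.
rewrite /trpoly /trFB horner_sum; apply: eq_bigr => i _.
by rewrite hornerM hornerC horner_exp hornerXsubC exprMn.
Qed.

From HB Require Import structures.
From mathcomp Require Import all_boot all_order all_algebra all_field.
Import GRing.Theory.
Local Open Scope ring_scope.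

(* With q = |B| and t = [F : B], expanding the quotient gives
   [p_u(x) = \sum_i u^(q^i) (x - a)^(q^i - 1)].  Hence [p_u(a) = u], so both
   spans in the statement are K itself, and [p_u(x) (x - a) = Tr(u (x - a))]
   for every x.  A trace is fixed by the q-th power, and on such elements Tr
   is multiplication by t, which vanishes because p divides t.  So
   [p_u(x) (x - a)] and its opposite have trace zero, which is the equation
   of K. *)

Section TraceQuotient.

Variables (B : finFieldType) (F : fieldExtType B).
Local Notation q := #|B|.
Local Notation t := (\dim {:F}).

Lemma pchar_nat_card_exp i : [pchar F].-nat (q ^ i)%N.
Proof.
have [p _ pB] := finPcharP B.
have pF : p \in [pchar F] by rewrite (GRing.pchar_lalg F).
have pq : p.-nat q by have := pprimeChar_pgroup pB; rewrite /pgroup.pgroup cardsT.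
by rewrite pnatX (eq_pnat _ (pcharf_eq pF)) pq.
Qed.

Lemma exprD_card_exp i (x y : F) :
  (x + y) ^+ (q ^ i)%N = x ^+ (q ^ i)%N + y ^+ (q ^ i)%N.
Proof. exact/exprDn_pchar/pchar_nat_card_exp. Qed.

Lemma expr_card_dim (w : F) : w ^+ (q ^ t)%N = w.
Proof.
by have := Fermat's_little_theorem (aspacef F) w; rewrite memvf => /esym/eqP.
Qed.

Lemma expr_card_exp_sum i I (r : seq I) (P : pred I) (f : I -> F) :
  (\sum_(j <- r | P j) f j) ^+ (q ^ i)%N = \sum_(j <- r | P j) f j ^+ (q ^ i)%N.
Proof.
apply: (big_morph (fun x => x ^+ _)) => [x y|]; first exact: exprD_card_exp.
by rewrite expr0n gtn_eqF // expn_gt0 (ltnW (finNzRing_gt1 B)).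
Qed.

Lemma trFBN (w : F) : trFB (- w) = - trFB w.
Proof.
rewrite /trFB -sumrN; apply: eq_bigr => i _.
exact/exprNn_pchar/pchar_nat_card_exp.
Qed.

Lemma trFB_expr_card (w : F) : trFB w ^+ q = trFB w.
Proof.
rewrite /trFB [LHS](expr_card_exp_sum 1).
under eq_bigr => i _ do rewrite -exprM -expnSr.
case: t (expr_card_dim w) => [|s] wqt; first by rewrite !big_ord0.
rewrite big_ord_recr big_ord_recl /= wqt expn0 expr1 addrC.
by congr (_ + _); apply: eq_bigr.
Qed.

Lemma trFB_fixed (c : F) : c ^+ q = c -> trFB c = t%:R * c.
Proof.
move=> cq; have cqi i : c ^+ (q ^ i)%N = c.
  by elim: i => [|i IHi]; rewrite ?expr1 // expnSr exprM IHi cq.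
rewrite /trFB (eq_bigr (fun=> c)) => [|i _]; last exact: cqi.
by rewrite sumr_const card_ord mulr_natl.
Qed.

Lemma trFB_trFB (w : F) : trFB (trFB w) = t%:R * trFB w.
Proof. exact/trFB_fixed/trFB_expr_card. Qed.

Lemma trquotE (a u x : F) :
  trquot a u x = \sum_(i < t) u ^+ (q ^ i)%N * (x - a) ^+ (q ^ i).-1.
Proof.
have trpoly_factor : trpoly a u = ('X - a%:P) *
    \sum_(i < t) (u ^+ (q ^ i)%N)%:P * ('X - a%:P) ^+ (q ^ i).-1.
  rewrite /trpoly mulr_sumr; apply: eq_bigr => i _.
  by rewrite mulrCA -exprS prednK // expn_gt0 (ltnW (finNzRing_gt1 B)).
rewrite /trquot trpoly_factor mulKp ?polyXsubC_eq0 // horner_sum.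
by apply: eq_bigr => i _; rewrite hornerM hornerC horner_exp hornerXsubC.
Qed.

Lemma trquot_id (a u : F) : trquot a u a = u.
Proof.
rewrite trquotE subrr; case: t (adim_gt0 (aspacef F)) => // s _.
rewrite big_ord_recl big1 => [|i _]; first by rewrite expn0 expr0 mulr1 addr0.
have q_gt1 : (1 < q ^ i.+1)%N by rewrite -{1}(expn0 q) ltn_exp2l ?finNzRing_gt1.
by rewrite expr0n -subn1 subn_eq0 leqNgt q_gt1 mulr0.
Qed.

Lemma trquot_mul (a u x : F) : trquot a u x * (x - a) = trFB (u * (x - a)).
Proof.
rewrite trquotE mulr_suml; apply: eq_bigr => i _.
by rewrite -mulrA -exprSr prednK ?expn_gt0 ?(ltnW (finNzRing_gt1 B)) // exprMn.
Qed.

End TraceQuotient.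

Theorem lemma7 (B : finFieldType) (F : fieldExtType B) (p n : nat)
  (hp : p \in [pchar B]) (hdim : \dim {:F} = n.+1) (hdvd : (p %| n.+1)%N)
  (astar abar : F) (hneq : astar != abar)
  (K : {vspace F})
  (hK : forall z : F, (z \in K) = (trFB (z * (abar - astar)) == 0))
  (u v : 'I_n.+1 -> F)
  (huK : basis_of K [seq u (widen_ord (leqnSn n) i) | i : 'I_n])
  (hvK : basis_of K [seq v (widen_ord (leqnSn n) i) | i : 'I_n])
  (hu : basis_of fullv [seq u i | i : 'I_n.+1])
  (hv : basis_of fullv [seq v i | i : 'I_n.+1]) :
  trquot astar (u ord_max) abar
    \in <<[seq trquot abar (v (widen_ord (leqnSn n) i)) abar | i : 'I_n]>>%VS
  /\
  trquot abar (v ord_max) astar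
    \in <<[seq trquot astar (u (widen_ord (leqnSn n) i)) astar | i : 'I_n]>>%VS.
Proof.
have dim0 : (\dim {:F})%:R = 0 :> F.
  have pF : p \in [pchar F] by rewrite (pchar_lalg F).
  by apply/eqP; rewrite hdim -(dvdn_pcharf pF).
have trquot_diag (w : 'I_n.+1 -> F) a :
    [seq trquot a (w (widen_ord (leqnSn n) i)) a | i : 'I_n] =
    [seq w (widen_ord (leqnSn n) i) | i : 'I_n].
  by apply: eq_image => // i; apply: trquot_id.
have trFB_trFB0 w : trFB (trFB w : F) = 0 by rewrite trFB_trFB dim0 mul0r.
split.
  rewrite trquot_diag; case/andP: hvK => /eqP -> _.
  by rewrite hK trquot_mul trFB_trFB0.
rewrite trquot_diag; case/andP: huK => /eqP -> _.
by rewrite hK -opprB mulrN trquot_mul trFBN trFB_trFB0 oppr0.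
Qed.
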